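(* Let $X$ be a Tychonoff space and $x \in X$. If player II has a winning strategy in the game $\mathsf{G}_1(\pi\mathcal{N}_x, \pi\mathcal{N}_x)$, then $X$ is supertight at $x$.
   Context: A family $\mathcal{S}$ of nonempty subsets of $X$ is a $\pi$-network at $x$ if every neighborhood of $x$ contains an element of $\mathcal{S}$. $\pi\mathcal{N}_x$ denotes the collection of all $\pi$-networks at $x$ consisting of finite sets. The game $\mathsf{G}_1(\pi\mathcal{N}_x,\pi\mathcal{N}_x)$: in each inning $n \in \omega$ player I chooses $\mathcal{S}_n \in \pi\mathcal{N}_x$, then player II chooses $S_n \in \mathcal{S}_n$; II wins iff $\{S_n : n \in \omega\} \in \pi\mathcal{N}_x$. $X$ is supertight at $x$ if for every $\pi$-network $\mathcal{P}$ at $x$ consisting of countable sets there is a countable subfamily $\mathcal{Q} \subset \mathcal{P}$ which is still a $\pi$-network at $x$. *)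

From mathcomp Require Import all_boot all_algebra.
From mathcomp Require Import all_classical all_reals all_analysis.
Set Implicit Arguments. Unset Strict Implicit. Unset Printing Implicit Defensive.
Local Open Scope classical_set_scope.

(* Tychonoff = completely regular (library notion, urysohn.v) + T1 (accessible). *)
Definition tychonoff_space (X : topologicalType) : Prop :=
  completely_regular_space X /\ accessible_space X.

Definition pi_network (X : topologicalType) (x : X) (S : set (set X)) : Prop :=
  (forall A, S A -> A !=set0) /\
  (forall U, nbhs x U -> exists2 A, S A & A `<=` U).

Definition piN (X : topologicalType) (x : X) (S : set (set X)) : Prop :=
  pi_network x S /\ (forall A, S A -> finite_set A).

(* A strategy for player II in G_1(piN_x, piN_x): given the moves
   S_0, ..., S_n of player I so far (the list, in order), II answers with a set.
   (II's own earlier moves are determined by I's moves and the strategy.) *)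
Definition strategyII (X : Type) := seq (set (set X)) -> set X.

Definition history (X : Type) (S : nat -> set (set X)) (n : nat) :
  seq (set (set X)) := [seq S i | i <- iota 0 n.+1].

Definition winning_strategyII (X : topologicalType) (x : X)
    (sigma : strategyII X) : Prop :=
  forall S : nat -> set (set X), (forall n, piN x (S n)) ->
    (forall n, S n (sigma (history S n))) /\
    piN x [set sigma (history S n) | n in [set: nat]].

Definition supertight (X : topologicalType) (x : X) : Prop :=
  forall P : set (set X), pi_network x P -> (forall A, P A -> countable A) ->
    exists Q : set (set X), [/\ Q `<=` P, countable Q & pi_network x Q].

From mathcomp Require Import all_boot all_algebra.
From mathcomp Require Import all_classical all_reals all_analysis.

(* II's winning strategy is used to build a countable tree of positions, each
   labelled by a member of P. At every legal position h, the points a for which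
   some legal move of I forces II to answer exactly {a} form a neighbourhood of
   x: otherwise I plays the singletons of the remaining points, a pi-network,
   and II's answer is such a singleton, although it was just forced. So some
   A_h in P lies in that neighbourhood; enumerate it and, for its k-th point,
   branch by the move forcing II to answer that point. If a neighbourhood U of
   x contained no A_h, following at each node a branch whose forced answer
   leaves U would give a play in which II never answers inside U, so II would
   lose. No separation axiom is needed. *)

Set Implicit Arguments.
Unset Strict Implicit.
Unset Printing Implicit Defensive.

Local Open Scope classical_set_scope.

Lemma countable_range T (A : set T) :
  countable A -> A !=set0 -> exists e : nat -> T, range e = A.
Proof.
move=> cA [a Aa]; elim/Ppointed: T => T in A cA a Aa *; first by case: (no a).
have /pcard_surjP[e eA] := cA.
exists (fun n => if `[< A (e n) >] then e n else a); apply/seteqP; split.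
  by move=> _ [n _ <-]; case: asboolP.
move=> b Ab; have [n _ eb] := eA b Ab.
by exists n => //; rewrite eb asboolT.
Qed.

Lemma history_rcons (X : Type) (S : nat -> set (set X)) n :
  history S n = rcons [seq S i | i <- iota 0 n] (S n).
Proof. by rewrite /history -addn1 iotaD add0n cats1 map_rcons. Qed.

Lemma history_nth (X : Type) (h : seq (set (set X))) N :
  history (nth N h) (size h) = rcons h N.
Proof. by rewrite history_rcons map_nth_iota0 // take_size nth_default. Qed.

Section WinningStrategy.

Variables (X : topologicalType) (x : X) (sigma : strategyII X).
Hypothesis win : winning_strategyII x sigma.

Definition singletons (A : set X) : set (set X) := [set [set a] | a in A].

Lemma piN_singletons (A : set X) :
  (forall U, nbhs x U -> A `&` U !=set0) -> piN x (singletons A).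
Proof.
move=> AU; split; last by move=> _ [a _ <-]; exact: finite_set1.
split; first by move=> _ [a _ <-]; exists a.
move=> U /AU[a [Aa Ua]]; exists [set a]; first by exists a.
by move=> _ ->.
Qed.

Definition legal (h : seq (set (set X))) :=
  forall i, i < size h -> piN x (nth set0 h i).

Lemma legal_rcons h S : legal h -> piN x S -> legal (rcons h S).
Proof.
move=> hl SN i; rewrite size_rcons ltnS nth_rcons leq_eqVlt.
by case: ltngtP => // ? _; exact: hl.
Qed.

Lemma legal_nth h N : legal h -> piN x N -> forall i, piN x (nth N h i).
Proof.
move=> hl NN i; case: (ltnP i (size h)) => hi; last by rewrite nth_default.
by rewrite (set_nth_default set0) //; exact: hl.
Qed.

Definition forces (h : seq (set (set X))) (a : X) :=
  exists2 S, piN x S & sigma (rcons h S) = [set a].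

Lemma nbhs_forces h : legal h -> nbhs x (forces h).
Proof.
move=> hl; apply: contrapT => not_nbhs.
pose N := singletons (~` forces h).
have NN : piN x N.
  apply: piN_singletons => U xU; apply: contrapT => noU; apply: not_nbhs.
  apply: filterS xU => a Ua; apply: contrapT => nfa; apply: noU; by exists a.
have [answer _] := win (legal_nth hl NN).
move: (answer (size h)); rewrite history_nth nth_default // => -[a nfa Ea].
by apply: nfa; exists N.
Qed.

Variable P : set (set X).
Hypotheses (Pnet : pi_network x P) (Pcount : forall A, P A -> countable A).

Definition forcing_enum h (e : nat -> X) (w : nat -> set (set X)) :=
  P (range e) /\ forall k, piN x (w k) /\ sigma (rcons h (w k)) = [set e k].

Lemma exists_forcing_enum h : legal h -> exists e w, forcing_enum h e w.
Proof.
move=> /nbhs_forces xF; have [A PA AF] := Pnet.2 _ xF.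
have [e eA] := countable_range (Pcount PA) (Pnet.1 _ PA).
have /choice[w ew] : forall k,
    exists S, piN x S /\ sigma (rcons h S) = [set e k].
  move=> k; have [S SN ES] : forces h (e k) by apply: AF; rewrite -eA; exists k.
  by exists S.
by exists e, w; split; rewrite ?eA.
Qed.

Lemma exists_forcing_enums :
  exists e w, forall h, legal h -> forcing_enum h (e h) (w h).
Proof.
have /choice[ew ewP] : forall h,
    exists ew : (nat -> X) * (nat -> set (set X)),
      legal h -> forcing_enum h ew.1 ew.2.
  move=> h; case: (pselect (legal h)) => [|not_legal].
    by move=> /exists_forcing_enum[e [w ?]]; exists (e, w).
  by exists (fun=> x, fun=> set0) => /not_legal.
by exists (fun h => (ew h).1), (fun h => (ew h).2).
Qed.

Section ForcingTree.

Variables (e : seq (set (set X)) -> nat -> X)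
  (w : seq (set (set X)) -> nat -> set (set X)).
Hypothesis ew : forall h, legal h -> forcing_enum h (e h) (w h).

Fixpoint node (s : seq nat) : seq (set (set X)) :=
  if s is k :: s' then rcons (node s') (w (node s') k) else [::].

Lemma legal_node s : legal (node s).
Proof.
elim: s => [|k s IH] /=; first by case.
by apply: legal_rcons => //; have [_ /(_ k)[]] := ew IH.
Qed.

Definition tree_net : set (set X) :=
  [set range (e (node s)) | s in [set: seq nat]].

Lemma tree_net_sub : tree_net `<=` P.
Proof. by move=> _ [s _ <-]; have [] := ew (@legal_node s). Qed.

Lemma countable_tree_net : countable tree_net.
Proof. exact: sub_countable (card_image_le _ _) (countableP _). Qed.

Section Branch.

Variable g : seq nat -> nat.

Fixpoint branch n := if n is m.+1 then g (branch m) :: branch m else [::].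

Definition branch_play n := w (node (branch n)) (g (branch n)).

Lemma node_branch n : node (branch n) = [seq branch_play i | i <- iota 0 n].
Proof.
by elim: n => // n IH; rewrite -/(history branch_play n) history_rcons -IH.
Qed.

Lemma branch_answer n :
  sigma (history branch_play n) = [set e (node (branch n)) (g (branch n))].
Proof.
rewrite history_rcons -node_branch.
by have [_ /(_ (g (branch n)))[]] := ew (@legal_node (branch n)).
Qed.

Lemma piN_branch_play n : piN x (branch_play n).
Proof. by have [_ /(_ (g (branch n)))[]] := ew (@legal_node (branch n)). Qed.

End Branch.

Lemma pi_network_tree_net : pi_network x tree_net.
Proof.
split; first by move=> _ [s _ <-]; apply: Pnet.1; apply: tree_net_sub; exists s.
move=> U xU; apply: contrapT => noA.
have /choice[g gU] : forall s, exists k, ~ U (e (node s) k).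
  move=> s; apply: contrapT => allU; apply: noA.
  exists (range (e (node s))); first by exists s.
  by move=> _ [k _ <-]; apply: contrapT => nU; apply: allU; exists k.
have [_ [[_ /(_ U xU)[_ [n _ <-] answerU]] _]] := win (piN_branch_play g).
by apply: (gU (branch g n)); apply: answerU; rewrite branch_answer.
Qed.

End ForcingTree.

End WinningStrategy.

Theorem theorem4p8 (X : topologicalType) (x : X) :
  tychonoff_space X ->
  (exists sigma : strategyII X, winning_strategyII x sigma) ->
  supertight x.
Proof.
move=> _ [sigma win] P Pnet Pcount.
have [e [w ew]] := exists_forcing_enums win Pnet Pcount.
exists (tree_net e w); split.
- exact: tree_net_sub ew.
- exact: countable_tree_net.
- exact (pi_network_tree_net win Pnet ew).
Qed.
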